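(* Let $s_0,t_0\ge 1$ be real numbers and let $\mathcal T$ be the infinite rooted tree of nodes generated from $(s_0,t_0)$ by the recursive rule described in the context. Put $p=(t_0-s_0)/2$. Then every node $N$ of $\mathcal T$, located at $(x,y)$, of depth $d$ and carrying parameters $(s,t)$, satisfies: (1) $s\ge 1$ and $t\ge 1$; (2) $(t-s)/2=p$; (3) the points $(x,y)+2^{-d}(-1,s)=(x-2^{-d},\,y+2^{-d}s)$ and $(x,y)+2^{-d}(1,t)=(x+2^{-d},\,y+2^{-d}t)$ both lie on the segment of $\mathbb R^2$ with extremities $(-1,s_0)$ and $(1,t_0)$.
   Context: Points of $\mathbb R^2$ are written $(x,y)$ (abscissa = space, ordinate = time). Given real numbers $s_0,t_0\ge 1$, a tree $\mathcal T$ is built recursively. Each node has a location $(x,y)\in\mathbb R^2$, a depth $d\in\mathbb N$ (the number of its ancestors that are split nodes), and a pair of real parameters $(s,t)$. The root is at $(0,0)$, has depth $0$ and parameters $(s_0,t_0)$. A node at $(x,y)$ of depth $d$ with parameters $(s,t)$ is: - a delay node if $s\ge 2$ and $t\ge 2$; it then has exactly one child, located at $(x,\,y+2^{-d})$, of depth $d$, with parameters $(s-1,\,t-1)$; - a split node otherwise (i.e. if $s<2$ or $t<2$); it then has exactly two children, both of depth $d+1$: a left child at $(x-2^{-(d+1)},\,y+2^{-(d+1)})$ with parameters $\bigl(2(s-\tfrac12),\,2(\tfrac{s+t}{2}-\tfrac12)\bigr)=(2s-1,\,s+t-1)$, and a right child at $(x+2^{-(d+1)},\,y+2^{-(d+1)})$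 with parameters $\bigl(2(\tfrac{s+t}{2}-\tfrac12),\,2(t-\tfrac12)\bigr)=(s+t-1,\,2t-1)$. The recursion never stops, so $\mathcal T$ is infinite. (Interpretation: a node at depth $d$ with parameters $(s,t)$ ''targets'' the segment from $(x,y)+2^{-d}(-1,s)$ to $(x,y)+2^{-d}(1,t)$.) *)

From Stdlib Require Import Reals Lra.
Open Scope R_scope.

Inductive is_node (s0 t0 : R) : R -> R -> nat -> R -> R -> Prop :=
| node_root : is_node s0 t0 0 0 0 s0 t0
| node_delay : forall x y d s t,
    is_node s0 t0 x y d s t -> 2 <= s -> 2 <= t ->
    is_node s0 t0 x (y + / 2 ^ d) d (s - 1) (t - 1)
| node_left : forall x y d s t,
    is_node s0 t0 x y d s t -> (s < 2 \/ t < 2) ->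
    is_node s0 t0 (x - / 2 ^ (S d)) (y + / 2 ^ (S d)) (S d)
      (2 * s - 1) (s + t - 1)
| node_right : forall x y d s t,
    is_node s0 t0 x y d s t -> (s < 2 \/ t < 2) ->
    is_node s0 t0 (x + / 2 ^ (S d)) (y + / 2 ^ (S d)) (S d)
      (s + t - 1) (2 * t - 1).

Definition on_segment (ax ay bx by_ px py : R) : Prop :=
  exists l : R, 0 <= l <= 1 /\
    px = (1 - l) * ax + l * bx /\ py = (1 - l) * ay + l * by_.

From Stdlib Require Import Reals Lra.
Open Scope R_scope.

(* A node at (x,y) of scale e = 2^-d targets the segment from (x-e, y+e s) to
   (x+e, y+e t).  Its slope (t-s)/2 never changes, so it suffices to follow
   the left end: it stays on the chord through (-1,s0) and (1,t0), and the
   abscissa interval [x-e, x+e] stays inside [-1,1], because a delay keeps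
   the interval and a split replaces it by one of its two halves. *)

Lemma Rinv_pow2_S (d : nat) : / 2 ^ S d = / 2 ^ d / 2.
Proof. simpl; field; apply pow_nonzero; lra. Qed.

Lemma Rinv_pow2_gt0 (d : nat) : 0 < / 2 ^ d.
Proof. apply Rinv_0_lt_compat, pow_lt; lra. Qed.

Section Chord.

Variables s0 t0 : R.

Definition chord_at (u : R) : R := s0 + (u + 1) / 2 * (t0 - s0).

Lemma chord_atD (u e : R) : chord_at (u + e) = chord_at u + e / 2 * (t0 - s0).
Proof. unfold chord_at; field. Qed.

Lemma on_segment_chord (u : R) :
  -1 <= u <= 1 -> on_segment (-1) s0 1 t0 u (chord_at u).
Proof.
  intros Hu; exists ((u + 1) / 2); unfold chord_at.
  repeat split; lra.
Qed.

Record well_placed (x y e s t : R) : Prop := {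
  wp_s_ge1 : 1 <= s;
  wp_t_ge1 : 1 <= t;
  wp_gap : t - s = t0 - s0;
  wp_left_in : -1 <= x - e;
  wp_right_in : x + e <= 1;
  wp_left_on_chord : y + e * s = chord_at (x - e) }.

Lemma well_placed_right_on_chord (x y e s t : R) :
  well_placed x y e s t -> y + e * t = chord_at (x + e).
Proof.
  intros [_ _ Hgap _ _ Hleft].
  replace (x + e) with (x - e + 2 * e) by ring.
  rewrite chord_atD, <- Hleft, <- Hgap; field.
Qed.

Lemma well_placed_delay (x y e s t : R) :
  well_placed x y e s t -> 2 <= s -> 2 <= t ->
  well_placed x (y + e) e (s - 1) (t - 1).
Proof.
  intros [Hs Ht Hgap Hl Hr Hleft] H2s H2t; split; lra.
Qed.

Lemma well_placed_left (x y e s t : R) :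
  0 < e -> well_placed x y e s t ->
  well_placed (x - e / 2) (y + e / 2) (e / 2) (2 * s - 1) (s + t - 1).
Proof.
  intros He [Hs Ht Hgap Hl Hr Hleft]; split; try lra.
  replace (x - e / 2 - e / 2) with (x - e) by field.
  rewrite <- Hleft; field.
Qed.

Lemma well_placed_right (x y e s t : R) :
  0 < e -> well_placed x y e s t ->
  well_placed (x + e / 2) (y + e / 2) (e / 2) (s + t - 1) (2 * t - 1).
Proof.
  intros He [Hs Ht Hgap Hl Hr Hleft]; split; try lra.
  replace (x + e / 2 - e / 2) with (x - e + e) by field.
  rewrite chord_atD, <- Hleft, <- Hgap; field.
Qed.

Lemma is_node_well_placed (x y : R) (d : nat) (s t : R) :
  1 <= s0 -> 1 <= t0 -> is_node s0 t0 x y d s t ->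
  well_placed x y (/ 2 ^ d) s t.
Proof.
  intros Hs0 Ht0 Hnode.
  induction Hnode as [| x y d s t _ IH H2s H2t
                      | x y d s t _ IH _ | x y d s t _ IH _].
  - simpl; rewrite Rinv_1; split; try lra.
    unfold chord_at; field.
  - now apply well_placed_delay.
  - rewrite Rinv_pow2_S; apply well_placed_left; [apply Rinv_pow2_gt0 | exact IH].
  - rewrite Rinv_pow2_S; apply well_placed_right; [apply Rinv_pow2_gt0 | exact IH].
Qed.

End Chord.

Theorem lemma1 (s0 t0 : R) (hs0 : 1 <= s0) (ht0 : 1 <= t0) :
  let p := (t0 - s0) / 2 in
  forall (x y : R) (d : nat) (s t : R),
    is_node s0 t0 x y d s t ->
    (1 <= s /\ 1 <= t) /\
    (t - s) / 2 = p /\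
    on_segment (-1) s0 1 t0 (x - / 2 ^ d) (y + / 2 ^ d * s) /\
    on_segment (-1) s0 1 t0 (x + / 2 ^ d) (y + / 2 ^ d * t).
Proof.
  intros p x y d s t Hnode.
  pose proof (is_node_well_placed s0 t0 x y d s t hs0 ht0 Hnode) as Hwp.
  pose proof (well_placed_right_on_chord s0 t0 x y _ s t Hwp) as Hright.
  pose proof (Rinv_pow2_gt0 d) as He.
  destruct Hwp as [Hs Ht Hgap Hl Hr Hleft].
  split; [| split; [| split]].
  - now split.
  - unfold p; rewrite Hgap; reflexivity.
  - rewrite Hleft; apply on_segment_chord; lra.
  - rewrite Hright; apply on_segment_chord; lra.
Qed.
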